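(* Let $X$ be a real normed linear space, $x\in X\setminus\{\theta\}$ and $\varepsilon\in[0,2)$. Then the following are equivalent: (i) $x$ is $\varepsilon$-smooth, i.e. $\operatorname{diam} J(x)\le\varepsilon$; (ii) $\sup_{y\in S_X}\{\rho'_+(x,y)-\rho'_-(x,y)\}\le\varepsilon\|x\|$.
   Context: $S_X$ is the unit sphere of $X$, $X^*$ the dual space, $S_{X^*}$ its unit sphere. For $x\neq\theta$, $J(x)=\{f\in S_{X^*}: f(x)=\|x\|\}$ is the set of supporting functionals at $x$, and $\operatorname{diam}A=\sup_{f,g\in A}\|f-g\|$. The norm derivatives are $\rho'_{+}(x,y)=\lim_{\lambda\to0^+}\frac{\|x+\lambda y\|^2-\|x\|^2}{2\lambda}$ and $\rho'_{-}(x,y)=\lim_{\lambda\to0^-}\frac{\|x+\lambda y\|^2-\|x\|^2}{2\lambda}$. *)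

From HB Require Import structures.
From mathcomp Require Import all_boot all_order all_algebra.
From mathcomp Require Import all_classical all_reals all_analysis.
Set Implicit Arguments. Unset Strict Implicit. Unset Printing Implicit Defensive.
Import Order.TTheory GRing.Theory Num.Theory.
Import numFieldNormedType.Exports.
Local Open Scope classical_set_scope.
Local Open Scope ring_scope.

Section Defs.
Context {R : realType} {X : normedModType R}.

Definition is_dual (f : X -> R) : Prop :=
  (forall (a : R) (u v : X), f (a *: u + v) = a * f u + f v) /\ continuous f.

Definition dual_norm (f : X -> R) : R :=
  sup [set `|f y| | y in [set y : X | `|y| <= 1]].

Definition J (x : X) : set (X -> R) :=
  [set f | is_dual f /\ dual_norm f = 1 /\ f x = `|x|].

Definition diam_le (A : set (X -> R)) (eps : R) : Prop :=
  forall f g, A f -> A g -> dual_norm (f \- g) <= eps.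

Definition eps_smooth (x : X) (eps : R) : Prop := diam_le (J x) eps.

Definition rho_quot (x y : X) (l : R) : R :=
  (`|x + l *: y| ^+ 2 - `|x| ^+ 2) / (2 * l).

Definition rho_plus (x y : X) : R := lim (rho_quot x y @ at_right 0).
Definition rho_minus (x y : X) : R := lim (rho_quot x y @ at_left 0).

End Defs.

From HB Require Import structures.
From mathcomp Require Import all_boot all_order all_algebra.
From mathcomp Require Import all_classical all_reals all_analysis.
From mathcomp Require Import ring lra.
Import Order.TTheory GRing.Theory Num.Theory.
Import numFieldNormedType.Exports.
Local Open Scope classical_set_scope.
Local Open Scope ring_scope.

(* Both norm derivatives are governed by the one-sided derivative of the norm,
   [tau(x, v) = lim_{t -> 0+} (|x + t v| - |x|) / t], which is sublinear in v:
   [rho'_+(x, y) = tau(x, y) |x|] and [rho'_-(x, y) = - tau(x, -y) |x|].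
   The supporting functionals at x are exactly the linear functionals below
   [tau(x, .)], so for every f, g in J(x) we get [f y - g y <= tau(x, y) + tau(x, -y)],
   which gives (ii) -> (i) after rescaling.  Conversely, Hahn-Banach extends
   [t y |-> t tau(x, y)] and [t y |-> - t tau(x, -y)] to two supporting
   functionals whose difference at y attains [tau(x, y) + tau(x, -y)]. *)

Section NormDerivative.
Context {R : realType} {X : normedModType R} (x : X).

Definition norm_quot (v : X) (t : R) : R := (`|x + t *: v| - `|x|) / t.

Definition norm_der (v : X) : R := inf [set norm_quot v t | t in `]0, +oo[].

Lemma norm_quot_ge v (t : R) : 0 < t -> - `|v| <= norm_quot v t.
Proof.
move=> t0; rewrite /norm_quot ler_pdivlMr // mulNr.
have := ler_normD (x + t *: v) (- (t *: v)).
rewrite addrK normrN normrZ gtr0_norm // [t * _]mulrC; lra.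
Qed.

Lemma norm_quot_le v (t : R) : 0 < t -> norm_quot v t <= `|v|.
Proof.
move=> t0; rewrite /norm_quot ler_pdivrMr //.
have := ler_normD x (t *: v).
rewrite normrZ gtr0_norm // [t * _]mulrC; lra.
Qed.

(* Convexity of [t |-> |x + t v|]: [x + s v] lies on the segment from x to [x + t v]. *)
Lemma norm_quot_le_quot v (s t : R) : 0 < s -> s <= t -> norm_quot v s <= norm_quot v t.
Proof.
move=> s0 st; have t0 : 0 < t by apply: lt_le_trans st.
set l := s / t.
have l0 : 0 <= l by rewrite divr_ge0 // ltW.
have l1 : l <= 1 by rewrite ler_pdivrMr // mul1r.
have seg : x + s *: v = (1 - l) *: x + l *: (x + t *: v).
  by rewrite scalerDr scalerA divfK ?gt_eqF // scalerBl scale1r addrA subrK.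
have conv : `|x + s *: v| <= (1 - l) * `|x| + l * `|x + t *: v|.
  rewrite seg (le_trans (ler_normD _ _)) // !normrZ -?normrM !ger0_norm ?subr_ge0 //.
rewrite /norm_quot ler_pdivrMr //.
have -> : (`|x + t *: v| - `|x|) / t * s = l * (`|x + t *: v| - `|x|) by rewrite /l; ring.
lra.
Qed.

Lemma has_lbound_norm_quot v : has_lbound [set norm_quot v t | t in `]0, +oo[].
Proof.
exists (- `|v|) => _ [t + <-]; rewrite /= in_itv /= andbT; exact: norm_quot_ge.
Qed.

Lemma norm_der_le_quot v (t : R) : 0 < t -> norm_der v <= norm_quot v t.
Proof.
move=> t0; apply: ge_inf; first exact: has_lbound_norm_quot.
by exists t => //=; rewrite in_itv /= andbT.
Qed.

Lemma norm_der_ge v (a : R) : (forall t, 0 < t -> a <= norm_quot v t) -> a <= norm_der v.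
Proof.
move=> lea; apply: lb_le_inf.
  by exists (norm_quot v 1), 1 => //=; rewrite in_itv /= andbT ltr01.
by move=> _ [t + <-]; rewrite /= in_itv /= andbT; exact: lea.
Qed.

Lemma norm_der_cvg v : norm_quot v t @[t --> 0^'+] --> norm_der v.
Proof.
apply: (@nondecreasing_at_right_cvgr R (norm_quot v) 0 (BInfty _ false)) => //.
- by move=> s t; rewrite !in_itv /= !andbT => s0 _; exact: norm_quot_le_quot.
- exact: has_lbound_norm_quot.
Qed.

Lemma norm_quotD u v (t : R) :
  0 < t -> norm_quot (u + v) t <= norm_quot u (2 * t) + norm_quot v (2 * t).
Proof.
move=> t0; rewrite /norm_quot.
have mid : x + t *: (u + v) = 2^-1 *: (x + (2 * t) *: u) + 2^-1 *: (x + (2 * t) *: v).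
  have h1 : 2^-1 * (2 * t) = t by field.
  have h2 : 2^-1 + 2^-1 = 1 :> R by field.
  by rewrite !scalerDr !scalerA h1 addrACA -scalerDl h2 scale1r.
have conv : `|x + t *: (u + v)| <=
    2^-1 * `|x + (2 * t) *: u| + 2^-1 * `|x + (2 * t) *: v|.
  by rewrite mid (le_trans (ler_normD _ _)) // !normrZ ger0_norm.
move: conv; set A := `|x + t *: (u + v)|; set B := `|x + (2 * t) *: u|.
set C := `|x + (2 * t) *: v|; set N := `|x| => conv.
have -> : (B - N) / (2 * t) + (C - N) / (2 * t) = ((B - N) / 2 + (C - N) / 2) / t.
  by field; rewrite gt_eqF.
rewrite ler_pM2r ?invr_gt0 //; lra.
Qed.

Lemma norm_derD u v : norm_der (u + v) <= norm_der u + norm_der v.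
Proof.
have le_quot (s t : R) :
    0 < s -> 0 < t -> norm_der (u + v) <= norm_quot u s + norm_quot v t.
  move=> s0 t0; pose m := Num.min s t; have m0 : 0 < m by rewrite lt_min s0.
  have m20 : 0 < m / 2 by rewrite divr_gt0.
  apply: (le_trans (norm_der_le_quot _ _ m20)); apply: (le_trans (norm_quotD u v _ m20)).
  have -> : 2 * (m / 2) = m by field.
  by apply: lerD; apply: norm_quot_le_quot; rewrite // ge_min lexx ?orbT.
have le_quotv (t : R) : 0 < t -> norm_der (u + v) - norm_quot v t <= norm_der u.
  by move=> t0; apply: norm_der_ge => s s0; have := le_quot s t s0 t0; lra.
suff : norm_der (u + v) - norm_der u <= norm_der v by lra.
by apply: norm_der_ge => t t0; have := le_quotv t t0; lra.
Qed.

Lemma norm_quotZ (a : R) v (t : R) :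
  0 < a -> 0 < t -> norm_quot (a *: v) t = a * norm_quot v (a * t).
Proof.
by move=> a0 t0; rewrite /norm_quot scalerA [t * a]mulrC; field; rewrite !gt_eqF.
Qed.

Lemma norm_derZ (a : R) v : 0 < a -> norm_der (a *: v) = a * norm_der v.
Proof.
move=> a0; apply/le_anti/andP; split; last first.
  apply: norm_der_ge => t t0; rewrite norm_quotZ // ler_pM2l //.
  by apply: norm_der_le_quot; exact: mulr_gt0.
rewrite -ler_pdivrMl //; apply: norm_der_ge => t t0; rewrite ler_pdivrMl //.
have ta : 0 < t / a by rewrite divr_gt0.
apply: (le_trans (norm_der_le_quot _ _ ta)); rewrite norm_quotZ //.
by rewrite [a * (t / a)]mulrC divfK ?gt_eqF.
Qed.

Lemma norm_der0 : norm_der 0 = 0.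
Proof.
have := @norm_derZ 2 0 (ltr0Sn R 1); rewrite scaler0 => h; lra.
Qed.

Lemma norm_der_le_norm v : norm_der v <= `|v|.
Proof. exact: le_trans (norm_der_le_quot v _ ltr01) (norm_quot_le v _ ltr01). Qed.

Lemma norm_derDN_ge0 v : 0 <= norm_der v + norm_der (- v).
Proof. by rewrite -norm_der0 -(subrr v) norm_derD. Qed.

Lemma norm_derDN_le (e : R) :
  (forall u, `|u| = 1 -> norm_der u + norm_der (- u) <= e) ->
  forall v, norm_der v + norm_der (- v) <= e * `|v|.
Proof.
move=> le_e v; have [->|v0] := eqVneq v 0.
  by rewrite oppr0 norm_der0 normr0 mulr0 addr0.
have [r r0 [u u1 ->]] : exists2 r, 0 < r & exists2 u, `|u| = 1 & v = r *: u.
  exists `|v|; first by rewrite normr_gt0.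
  exists (`|v|^-1 *: v); first by rewrite normrZ normfV normr_id mulVf ?normr_eq0.
  by rewrite scalerA mulfV ?normr_eq0 // scale1r.
rewrite -scalerN !norm_derZ // -mulrDr normrZ u1 gtr0_norm // mulr1 mulrC.
by rewrite ler_pM2r // le_e.
Qed.

Lemma norm_der_self : norm_der x = `|x|.
Proof.
apply/le_anti/andP; split; first exact: norm_der_le_norm.
apply: norm_der_ge => t t0.
rewrite /norm_quot -{2}[x]scale1r -scalerDl normrZ gtr0_norm ?addr_gt0 //.
by rewrite ler_pdivlMr //; lra.
Qed.

Lemma norm_derN_self : norm_der (- x) = - `|x|.
Proof.
apply/le_anti/andP; split; last by have := norm_derDN_ge0 x; rewrite norm_der_self; lra.
apply: le_trans (norm_der_le_quot _ _ ltr01) _.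
by rewrite /norm_quot scale1r subrr normr0 sub0r divr1.
Qed.

Lemma rho_quotE y (t : R) :
  t != 0 -> rho_quot x y t = norm_quot y t * ((`|x + t *: y| + `|x|) / 2).
Proof. by move=> t0; rewrite /rho_quot /norm_quot; field; rewrite t0. Qed.

Lemma norm_mean_cvg y : (`|x + t *: y| + `|x|) / 2 @[t --> 0^'+] --> `|x|.
Proof.
apply: cvg_at_right_filter.
have shift : x + t *: y @[t --> (0 : R)] --> x.
  have := cvgD (cvg_cst x) (cvgZ (@cvg_id _ (nbhs (0 : R))) (cvg_cst y)).
  by rewrite scale0r addr0; apply; typeclasses eauto.
have := cvgMr_tmp (b := 2^-1) (cvgD (cvg_norm shift) (cvg_cst `|x|)).
have -> : (`|x| + `|x|) / 2 = `|x| by field.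
by apply; typeclasses eauto.
Qed.

Lemma rho_plusE y : rho_plus x y = norm_der y * `|x|.
Proof.
apply: cvg_lim; first exact: norm_hausdorff.
apply: cvg_trans (cvgM (norm_der_cvg y) (norm_mean_cvg y)).
apply: near_eq_cvg; near=> t; rewrite /= rho_quotE //.
Unshelve. all: by end_near.
Qed.

Lemma rho_minusE y : rho_minus x y = - (norm_der (- y) * `|x|).
Proof.
apply: cvg_lim; first exact: norm_hausdorff.
apply/cvg_at_leftNP; rewrite oppr0.
apply: cvg_trans (cvgN (cvgM (norm_der_cvg (- y)) (norm_mean_cvg (- y)))).
apply: near_eq_cvg; near=> t.
have t0 : - t != 0 by rewrite oppr_eq0 gt_eqF //; near: t; exact: nbhs_right_gt.
by rewrite /= rho_quotE // /norm_quot scaleNr -scalerN invrN mulrN mulNr.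
Unshelve. all: by end_near.
Qed.

Lemma rho_plus_minusE y :
  rho_plus x y - rho_minus x y = (norm_der y + norm_der (- y)) * `|x|.
Proof. by rewrite rho_plusE rho_minusE; ring. Qed.

End NormDerivative.

Section LinearFunctional.
Context {R : pzRingType} {X : lmodType R}.

Definition linear_functional (f : X -> R) :=
  forall (a : R) (u v : X), f (a *: u + v) = a * f u + f v.

Context {f : X -> R}.
Hypothesis linf : linear_functional f.

Lemma linear_functional0 : f 0 = 0.
Proof. by have := linf (-1) 0 0; rewrite scaler0 addr0 mulN1r addNr. Qed.

Lemma linear_functionalD u v : f (u + v) = f u + f v.
Proof. by have := linf 1 u v; rewrite scale1r mul1r. Qed.

Lemma linear_functionalZ a u : f (a *: u) = a * f u.
Proof. by have := linf a u 0; rewrite !addr0 linear_functional0 addr0. Qed.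

Lemma linear_functionalN u : f (- u) = - f u.
Proof. by rewrite -scaleN1r linear_functionalZ mulN1r. Qed.

End LinearFunctional.

Section HahnBanach.
Context {R : realType} {X : lmodType R} (p : X -> R).
Hypothesis pD : forall u v, p (u + v) <= p u + p v.
Hypothesis pZ : forall (a : R) v, 0 < a -> p (a *: v) = a * p v.

Let p0 : p 0 = 0.
Proof. by have := pZ 2 0 (ltr0Sn R 1); rewrite scaler0 => h; lra. Qed.

(* Partial linear functionals below p, encoded by their graphs. *)
Definition dominated_graph (G : set (X * R)) :=
  [/\ forall s u a w b, G (u, a) -> G (w, b) -> G (s *: u + w, s * a + b),
      forall v a b, G (v, a) -> G (v, b) -> a = b &
      forall v a, G (v, a) -> a <= p v].

Lemma dominated_graph_bigcup (F : set (set (X * R))) :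
  (forall G, F G -> dominated_graph G) -> total_on F subset ->
  dominated_graph (\bigcup_(G in F) G).
Proof.
move=> domF Ftot.
have common z1 z2 : (\bigcup_(G in F) G) z1 -> (\bigcup_(G in F) G) z2 ->
    exists2 G, F G & G z1 /\ G z2.
  move=> [G1 F1 G1z] [G2 F2 G2z].
  by case: (Ftot G1 G2 F1 F2) => sub; [exists G2 | exists G1] => //;
    split => //; exact: sub.
split.
- move=> s u a w b ua wb; have [G FG [Gua Gwb]] := common _ _ ua wb.
  by exists G => //; have [lin _ _] := domF G FG; exact: lin.
- move=> v a b va vb; have [G FG [Gva Gvb]] := common _ _ va vb.
  by have [_ fn _] := domF G FG; exact: fn Gva Gvb.
- by move=> v a [G FG Gva]; have [_ _ dom] := domF G FG; exact: dom.
Qed.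

Lemma dominated_graph_bigcupU (L : set (X * R)) : dominated_graph L ->
  forall F : set (set (X * R)), F `<=` (fun A => dominated_graph (A `|` L)) ->
  total_on F subset -> dominated_graph (\bigcup_(A in F) A `|` L).
Proof.
move=> domL F domF Ftot; pose F' := [set L] `|` [set A `|` L | A in F].
have -> : \bigcup_(A in F) A `|` L = \bigcup_(G in F') G.
  apply/seteqP; split=> z.
    case=> [[A FA Az]|Lz]; last by exists L => //; left.
    by exists (A `|` L); [right; exists A | left].
  case=> _ [->|[A FA <-]]; first by right.
  by case=> [Az|Lz]; [left; exists A | right].
apply: dominated_graph_bigcup; first by move=> _ [-> | [A FA <-]] //; exact: domF.
move=> _ _ [-> | [A1 FA1 <-]] [-> | [A2 FA2 <-]].
- by left.
- by left; exact: subsetUr.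
- by right; exact: subsetUr.
- by case: (Ftot A1 A2 FA1 FA2) => sub; [left | right]; exact: setSU.
Qed.

Definition line_graph (y : X) (c : R) := range (fun t : R => (t *: y, t * c)).

Lemma dominated_line_graph (y : X) (c : R) :
  y != 0 -> - p (- y) <= c -> c <= p y -> dominated_graph (line_graph y c).
Proof.
move=> y0 cge cle; split.
- move=> s _ _ _ _ [t1 _ [<- <-]] [t2 _ [<- <-]]; exists (s * t1 + t2) => //.
  by rewrite scalerDl scalerA mulrDl mulrA.
- move=> v a b [t1 _ [e1 <-]] [t2 _ [e2 <-]].
  have /eqP : (t1 - t2) *: y = 0 by rewrite scalerBl e1 e2 subrr.
  by rewrite scaler_eq0 (negbTE y0) orbF subr_eq0 => /eqP ->.
- move=> _ _ [t _ [<- <-]]; have [t0|t0|->] := ltgtP t 0.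
  + have -> : t *: y = (- t) *: (- y) by rewrite scalerN scaleNr opprK.
    have nt : 0 < - t by rewrite oppr_gt0.
    by rewrite pZ //; have := ler_wpM2l (ltW nt) cge; lra.
  + by rewrite pZ // ler_wpM2l // ltW.
  + by rewrite mul0r scale0r p0.
Qed.

Section Extension.
Context {A : set (X * R)} {v : X}.
Hypotheses (domA : dominated_graph A) (A00 : A (0, 0)) (vA : forall a, ~ A (v, a)).

Let AZ s {w a} : A (w, a) -> A (s *: w, s * a).
Proof.
by have [lin _ _] := domA => Awa; have := lin s _ _ _ _ Awa A00; rewrite !addr0.
Qed.

Let AD {w a w' a'} : A (w, a) -> A (w', a') -> A (w + w', a + a').
Proof.
have [lin _ _] := domA => Awa Awa'.
by have := lin 1 _ _ _ _ Awa Awa'; rewrite scale1r mul1r.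
Qed.

Let A_le {w a} : A (w, a) -> a <= p w.
Proof. by have [_ _ dom] := domA; exact: dom. Qed.

Let sep {w a w' a'} : A (w, a) -> A (w', a') -> a - p (w - v) <= p (w' + v) - a'.
Proof.
move=> Awa Awa'; have := A_le (AD Awa Awa'); have := pD (w - v) (w' + v).
by rewrite addrACA addNr addr0; lra.
Qed.

(* Any value in [sup (a - p (w - v)), inf (p (w + v) - a)] may be assigned to v. *)
Let c := sup [set z.2 - p (z.1 - v) | z in A].

Let c_ge {w a} : A (w, a) -> a - p (w - v) <= c.
Proof.
move=> Awa; apply: ub_le_sup; last by exists (w, a).
by exists (p v) => _ [[w' a'] Awa' <-]; have := sep Awa' A00; rewrite add0r subr0.
Qed.

Let c_le {w a} : A (w, a) -> c <= p (w + v) - a.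
Proof.
move=> Awa; apply: ge_sup; first by exists (0 - p (0 - v)), (0, 0).
by move=> _ [[w' a'] Awa' <-]; exact: sep.
Qed.

Let B := [set z | exists w a t, A (w, a) /\ z = (w + t *: v, a + t * c)].

Let B_le {w a} t : A (w, a) -> a + t * c <= p (w + t *: v).
Proof.
move=> Awa; have [t0|t0|->] := ltgtP t 0; last by rewrite mul0r scale0r !addr0 A_le.
- have nt : 0 < - t by rewrite oppr_gt0.
  have := c_ge (AZ (- t)^-1 Awa); rewrite -(ler_pM2l nt) mulrBr mulrA divff ?gt_eqF //.
  have -> : w + t *: v = (- t) *: ((- t)^-1 *: w - v).
    by rewrite scalerBr scalerA divff ?gt_eqF // scale1r scaleNr opprK.
  by rewrite pZ // mul1r; lra.
- have := c_le (AZ t^-1 Awa); rewrite -(ler_pM2l t0) mulrBr mulrA divff ?gt_eqF //.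
  have -> : w + t *: v = t *: (t^-1 *: w + v).
    by rewrite scalerDr scalerA divff ?gt_eqF // scale1r.
  by rewrite pZ // mul1r; lra.
Qed.

Let B_functional w1 a1 t1 w2 a2 t2 : A (w1, a1) -> A (w2, a2) ->
  w1 + t1 *: v = w2 + t2 *: v -> a1 + t1 * c = a2 + t2 * c.
Proof.
move=> Aw1 Aw2 e; have [lin fn _] := domA.
have [t12|t12] := eqVneq t1 t2.
  subst t2; have ew : w1 = w2 := addIr _ e.
  by rewrite ew in Aw1; rewrite (fn _ _ _ Aw1 Aw2).
exfalso; apply: (vA ((t1 - t2)^-1 * (a2 - a1))).
have -> : v = (t1 - t2)^-1 *: (w2 - w1).
  have e' : (t1 - t2) *: v = w2 - w1.
    by rewrite scalerBl -[t1 *: v](addKr w1) e addrA addrK addrC.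
  by rewrite -e' scalerA mulVf ?subr_eq0 // scale1r.
apply: AZ; have := lin (-1) _ _ _ _ Aw1 Aw2.
by rewrite scaleN1r mulN1r addrC [- a1 + _]addrC.
Qed.

Let B_dominated : dominated_graph B.
Proof.
have [lin _ _] := domA; split.
- move=> s _ _ _ _ [w1 [a1 [t1 [Aw1 [-> ->]]]]] [w2 [a2 [t2 [Aw2 [-> ->]]]]].
  exists (s *: w1 + w2), (s * a1 + a2), (s * t1 + t2); split; first exact: lin.
  congr (_, _); last by ring.
  by rewrite scalerDr scalerA scalerDl addrACA.
- move=> z _ _ [w1 [a1 [t1 [Aw1 [e1 ->]]]]] [w2 [a2 [t2 [Aw2 [e2 ->]]]]].
  by apply: B_functional Aw1 Aw2 _; rewrite -e1 -e2.
- by move=> _ _ [w [a [t [Awa [-> ->]]]]]; exact: B_le.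
Qed.

Lemma dominated_graph_extension : exists2 B, dominated_graph B & A `<` B.
Proof.
exists B; first exact: B_dominated.
split; first by move=> [w a] Awa; exists w, a, 0; rewrite scale0r mul0r !addr0.
move=> /(_ (v, c)) BA; apply: (vA c); apply: BA.
by exists 0, 0, 1; rewrite scale1r mul1r !add0r.
Qed.

End Extension.

Lemma hahn_banach_line (y : X) (c : R) : y != 0 -> - p (- y) <= c -> c <= p y ->
  exists f, [/\ linear_functional f, f y = c & forall v, f v <= p v].
Proof.
move=> y0 cge cle; set L := line_graph y c.
have domL : dominated_graph L by exact: dominated_line_graph.
have [M [domM maxM]] := Zorn_bigcup (dominated_graph_bigcupU L domL).
set D := M `|` L in domM; have LD : L `<=` D by exact: subsetUr.
have D00 : D (0, 0) by apply: LD; exists 0 => //; rewrite scale0r mul0r.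
have total w : exists a, D (w, a).
  apply: contrapT => /forallNP Dw.
  have [B domB DB] := dominated_graph_extension domM D00 Dw.
  apply: (maxM B); last by rewrite setUidl //; apply: subset_trans LD (properW DB).
  split; first exact: subset_trans (@subsetUl _ M L) (properW DB).
  by move=> BM; case: DB => _; apply; apply: subset_trans BM (@subsetUl _ M L).
pose f w := projT1 (cid (total w)).
have Df w : D (w, f w) := projT2 (cid (total w)).
have [lin fn dom] := domM.
exists f; split.
- by move=> a u w; apply: fn (Df _) (lin a _ _ _ _ (Df u) (Df w)).
- by apply: fn (Df y) _; apply: LD; exists 1 => //; rewrite scale1r mul1r.
- by move=> w; exact: dom (Df w).
Qed.

End HahnBanach.

Section DualNorm.
Context {R : realType} {X : normedModType R}.
Implicit Types (f : X -> R) (M : R).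

Lemma dual_norm_le f M : 0 <= M -> (forall v, `|f v| <= M * `|v|) -> dual_norm f <= M.
Proof.
move=> M0 fM; apply: ge_sup; first by exists `|f 0|, 0 => //=; rewrite normr0.
by move=> _ [u /= u1 <-]; apply: le_trans (fM u) _; rewrite ler_piMr.
Qed.

Lemma dual_norm_ge f M u : 0 <= M -> (forall v, `|f v| <= M * `|v|) ->
  `|u| <= 1 -> `|f u| <= dual_norm f.
Proof.
move=> M0 fM u1; apply: ub_le_sup; last by exists u.
by exists M => _ [w /= w1 <-]; apply: le_trans (fM w) _; rewrite ler_piMr.
Qed.

Lemma dual_norm1_le f :
  linear_functional f -> dual_norm f = 1 -> forall v, `|f v| <= `|v|.
Proof.
move=> linf f1.
have f_le u : `|u| <= 1 -> `|f u| <= 1.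
  move=> u1; rewrite -f1; apply: sup_upper_bound; last by exists u.
  apply: contrapT => nsup; move: f1; rewrite /dual_norm sup_out //.
  by move/eqP; rewrite eq_sym oner_eq0.
move=> v; have [->|v0] := eqVneq v 0; first by rewrite linear_functional0 // !normr0.
have nv : 0 < `|v| by rewrite normr_gt0.
have := f_le (`|v|^-1 *: v).
rewrite normrZ normfV normr_id mulVf ?gt_eqF // lexx linear_functionalZ //.
rewrite normrM normfV normr_id.
by move/(_ isT); rewrite ler_pdivrMl // mulr1.
Qed.

Lemma linear_functional_continuous f :
  linear_functional f -> (forall v, `|f v| <= `|v|) -> continuous f.
Proof.
move=> linf f_le v; apply/cvgrPdist_le => e e0; near=> z.
rewrite -linear_functionalN // -linear_functionalD //.
apply: le_trans (f_le _) _; near: z.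
by apply: cvgr_dist_le => //; exact: cvg_id.
Unshelve. all: by end_near.
Qed.

End DualNorm.

Section SupportingFunctionals.
Context {R : realType} {X : normedModType R} {x : X}.
Hypothesis x0 : x != 0.

Lemma J_le_norm_der f v : J x f -> f v <= norm_der x v.
Proof.
move=> [[linf _] [f1 fx]]; apply: norm_der_ge => t t0.
rewrite /norm_quot ler_pdivlMr // -fx mulrC -linear_functionalZ //.
rewrite lerBrDr -linear_functionalD //; apply: le_trans (ler_norm _) _.
by rewrite addrC; exact: dual_norm1_le.
Qed.

Lemma J_of_norm_der f : linear_functional f -> (forall v, f v <= norm_der x v) -> J x f.
Proof.
move=> linf f_le.
have f_norm v : `|f v| <= `|v|.
  rewrite ler_norml lerNl -linear_functionalN //; apply/andP; split.
    by rewrite -(normrN v); apply: le_trans (f_le _) (norm_der_le_norm _ _).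
  exact: le_trans (f_le _) (norm_der_le_norm _ _).
have fx : f x = `|x|.
  apply/le_anti; rewrite -{1}(norm_der_self x) f_le /= -lerN2 -linear_functionalN //.
  by rewrite -(norm_derN_self x) f_le.
have f1 v : `|f v| <= 1 * `|v| by rewrite mul1r.
have nx : 0 < `|x| by rewrite normr_gt0.
split; first by split => //; exact: linear_functional_continuous.
split => //; apply/le_anti; rewrite dual_norm_le //=.
have := dual_norm_ge f 1 (`|x|^-1 *: x) ler01 f1.
rewrite normrZ normfV normr_id mulVf ?gt_eqF // linear_functionalZ // fx.
by rewrite mulVf ?gt_eqF // normr1; exact.
Qed.

Lemma J_exists {y c} : y != 0 -> - norm_der x (- y) <= c -> c <= norm_der x y ->
  exists2 f, J x f & f y = c.
Proof.
move=> y0 cge cle.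
have [f [linf <- f_le]] :
    exists f, [/\ linear_functional f, f y = c & forall v, f v <= norm_der x v].
  by apply: hahn_banach_line => //; [exact: norm_derD | exact: norm_derZ].
by exists f => //; exact: J_of_norm_der.
Qed.

Lemma J_sub_le_norm_der {f g} v : J x f -> J x g ->
  f v - g v <= norm_der x v + norm_der x (- v).
Proof.
move=> Jf Jg; have [[ling _] _] := Jg.
by rewrite -(linear_functionalN ling); apply: lerD; exact: J_le_norm_der.
Qed.

Lemma J_sub_le_dual_norm {f g} u : J x f -> J x g -> `|u| <= 1 ->
  `|f u - g u| <= dual_norm (f \- g).
Proof.
move=> [[linf _] [f1 _]] [[ling _] [g1 _]] u1.
apply: (dual_norm_ge (f \- g) 2 u) => // v /=.
apply: le_trans (ler_normB _ _) _.
by rewrite mulr2n mulrDl mul1r lerD // dual_norm1_le.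
Qed.

End SupportingFunctionals.

Theorem lemma2p2 (R : realType) (X : normedModType R) (x : X) (eps : R) :
  x != 0 -> 0 <= eps < 2 ->
  (eps_smooth x eps <->
   (forall y : X, `|y| = 1 -> rho_plus x y - rho_minus x y <= eps * `|x|)).
Proof.
move=> x0 /andP[eps0 _]; have nx : 0 < `|x| by rewrite normr_gt0.
split=> [smooth y y1 | gap f g Jf Jg].
- rewrite rho_plus_minusE ler_pM2r //.
  have y0 : y != 0 by rewrite -normr_gt0 y1.
  have c_le : - norm_der x (- y) <= norm_der x y by have := norm_derDN_ge0 x y; lra.
  have [f Jf fy] := J_exists x0 y0 c_le (lexx _).
  have [g Jg gy] := J_exists x0 y0 (lexx _) c_le.
  apply: le_trans (smooth f g Jf Jg).
  have := J_sub_le_dual_norm y Jf Jg; rewrite y1 fy gy opprK => /(_ (lexx 1)).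
  exact/le_trans/ler_norm.
- apply: dual_norm_le => // v /=.
  have gap1 u : `|u| = 1 -> norm_der x u + norm_der x (- u) <= eps.
    by move=> u1; have := gap u u1; rewrite rho_plus_minusE ler_pM2r.
  have := norm_derDN_le x eps gap1 v.
  have := J_sub_le_norm_der v Jf Jg; have := J_sub_le_norm_der v Jg Jf.
  rewrite ler_norml; lra.
Qed.
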